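(* Let $G$ be a finite graph with nonnegative edge lengths, let $\theta\geq 0$, and let $v$ be a vertex of $G$. Consider the game Graph Exploration on $G$ started at $v$ with parameter $\theta$. Then Bob's payoff under optimal play by both players equals $M(G)-M(G-v)$.
   Context: Graph Exploration: two players, Alice and Bob, take turns choosing the next edge of a self-avoiding walk in $G$ starting at $v$, with Alice moving first. The player who chooses an edge pays its length to the opponent. At each turn the player to move may instead (and, if no move is available, must) terminate the game by paying $\theta/2$ to the opponent. Each player tries to maximize their total payoff; this is a finite zero-sum game of perfect information. For a finite graph $H$ with edge lengths, $M(H)$ denotes the cost of the diluted matching problem: the minimum, over all partial matchings of $H$ (sets of edges no two sharing a vertex), of the sum of the lengths of the edges in the matching plus $\theta/2$ times the number of vertices not covered by it. $G-v$ is the graph obtained from $G$ by deleting $v$ and its incident edges. *)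

From HB Require Import structures.
From mathcomp Require Import all_boot all_order all_algebra.
Set Implicit Arguments. Unset Strict Implicit. Unset Printing Implicit Defensive.
Import Order.TTheory GRing.Theory Num.Theory.
Local Open Scope ring_scope.

(* A finite (simple) graph is given by a vertex type T : finType and a
   symmetric irreflexive adjacency relation e : rel T; edge lengths are
   given by w : T -> T -> R (only its values on edges matter). *)

Section GraphExploration.
Variables (R : realFieldType) (T : finType) (e : rel T) (w : T -> T -> R)
          (theta : R).

(* Value of the Graph Exploration game for the player about to move, i.e.
   that player's optimal net payoff (amount received minus amount paid from
   now on), when the walk has visited the vertices in S and currently sits
   at u.  The mover may terminate (paying theta/2, net -theta/2) or move
   along an edge ux to an unvisited vertex x (paying w u x, after which the
   opponent is to move; zero-sum, so the mover then gets minus the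
   opponent's value). *)
Fixpoint ge_value (n : nat) (S : {set T}) (u : T) : R :=
  match n with
  | 0%N => - (theta / 2%:R)
  | n'.+1 =>
      \big[Num.max/- (theta / 2%:R)]_(x | e u x && (x \notin S))
         (- w u x - ge_value n' (x |: S) x)
  end.

(* Game started at v: the walk has visited {v}; Alice moves first.
   The fuel #|T| suffices since each move visits a new vertex. *)
Definition alice_payoff (v : T) : R := ge_value #|T| [set v] v.
Definition bob_payoff (v : T) : R := - alice_payoff v.

(* Partial matchings of the induced subgraph on the vertex set A,
   represented as sets of ordered pairs (x, y) with xy an edge, both
   endpoints in A, and distinct pairs having disjoint endpoint sets
   (so each matched edge occurs exactly once). *)
Definition endpoints (p : T * T) : {set T} := [set p.1; p.2].

Definition is_matching (A : {set T}) (P : {set T * T}) : bool :=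
  [forall p in P, [&& e p.1 p.2, p.1 \in A & p.2 \in A]] &&
  [forall p in P, forall q in P, (p != q) ==> [disjoint endpoints p & endpoints q]].

Definition covered (P : {set T * T}) : {set T} := \bigcup_(p in P) endpoints p.

Definition matching_cost (A : {set T}) (P : {set T * T}) : R :=
  \sum_(p in P) w p.1 p.2 + (theta / 2%:R) * (#|A :\: covered P|)%:R.

(* Diluted matching cost M(H) of the induced subgraph H on vertex set A.
   The empty matching (cost theta/2 * #|A|) is always admissible, and is
   also used as the neutral element of the minimum. *)
Definition diluted_M (A : {set T}) : R :=
  \big[Num.min/(theta / 2%:R) * (#|A|)%:R]_(P : {set T * T} | is_matching A P)
     matching_cost A P.

End GraphExploration.

From HB Require Import structures.
From mathcomp Require Import all_boot all_order all_algebra.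
From mathcomp Require Import ring.
Import Order.TTheory GRing.Theory Num.Theory.
Local Open Scope ring_scope.
Set Implicit Arguments. Unset Strict Implicit. Unset Printing Implicit Defensive.

(** In an optimal diluted matching of the graph induced on [u |: B], the
    vertex [u] is either uncovered (cost [theta/2]) or matched to a neighbour
    [x] in [B], which then disappears as well, so
    [M(u |: B) = min (theta/2 + M(B), min_x (w u x + M(B :\ x)))].
    For the mover at [u] with unvisited set [U], terminating corresponds to
    leaving [u] uncovered and moving to [x] to matching [u] with [x]; hence,
    by backward induction on [#|U|], the mover's value is
    [M(U) - M(u |: U)].  At the start [U = [set~ v]], which gives Alice
    [M(G - v) - M(G)]. *)

Section DilutedMatching.
Variables (R : realFieldType) (T : finType) (e : rel T) (w : T -> T -> R)
          (theta : R).

Local Notation M := (diluted_M e w theta).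
Local Notation cost := (matching_cost w theta).
Local Notation h := (theta / 2%:R).

Implicit Types (A B : {set T}) (P Q : {set T * T}) (p : T * T).

Lemma is_matchingP A P : is_matching e A P <->
  (forall p, p \in P -> [&& e p.1 p.2, p.1 \in A & p.2 \in A]) /\
  (forall p q, p \in P -> q \in P -> p != q ->
     [disjoint endpoints p & endpoints q]).
Proof.
split.
- case/andP => /forall_inP edgeP /forall_inP disjP; split => // p q pP qP.
  exact: implyP (forall_inP (disjP p pP) q qP).
- case=> edgeP disjP; apply/andP; split; apply/forall_inP => // p pP.
  by apply/forall_inP => q qP; apply/implyP; apply: disjP.
Qed.

Lemma is_matching_covered A P : is_matching e A P -> covered P \subset A.
Proof.
case/is_matchingP => edgeP _; apply/subsetP => y /bigcupP [p /edgeP].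
by case/and3P => _ p1A p2A; rewrite !inE => /orP [] /eqP ->.
Qed.

Lemma is_matching_subset A A' P Q : is_matching e A P -> Q \subset P ->
  covered Q \subset A' -> is_matching e A' Q.
Proof.
move=> /is_matchingP [edgeP disjP] /subsetP sQP /subsetP sQA'.
apply/is_matchingP; split => [q qQ | p q pQ qQ];
  last exact: disjP (sQP _ pQ) (sQP _ qQ).
case/and3P: (edgeP q (sQP q qQ)) => -> _ _ /=.
by apply/andP; split; apply: sQA'; apply/bigcupP; exists q; rewrite // !inE eqxx ?orbT.
Qed.

Lemma is_matching_setU1 A P p : is_matching e A P -> e p.1 p.2 ->
  [disjoint endpoints p & A] -> is_matching e (endpoints p :|: A) (p |: P).
Proof.
move=> PA ep pA; have /subsetP sPA := is_matching_covered PA.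
have disj_p q : q \in P -> [disjoint endpoints p & endpoints q].
  move=> qP; apply/pred0P => y /=; apply/negbTE/andP => -[yp yq].
  by have := disjointFr pA yp; rewrite sPA //; apply/bigcupP; exists q.
case/is_matchingP: PA => edgeP disjP; apply/is_matchingP; split.
- move=> q /setU1P [-> | /edgeP /and3P [eq_q q1A q2A]].
  + by rewrite ep !inE !eqxx ?orbT.
  + by rewrite eq_q !inE q1A q2A !orbT.
- move=> q r /setU1P [-> | qP] /setU1P [-> | rP]; rewrite ?eqxx //.
  + by move=> _; apply: disj_p.
  + by move=> _; rewrite disjoint_sym; apply: disj_p.
  + exact: disjP.
Qed.

Lemma coveredU1 p P : covered (p |: P) = endpoints p :|: covered P.
Proof. by rewrite /covered bigcup_setU big_set1. Qed.

Lemma matching_cost_setU1 A P p : p \notin P -> [disjoint endpoints p & A] ->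
  cost (endpoints p :|: A) (p |: P) = w p.1 p.2 + cost A P.
Proof.
move=> pP pA; rewrite /matching_cost big_setU1 //= coveredU1 -addrA.
suff -> : (endpoints p :|: A) :\: (endpoints p :|: covered P) = A :\: covered P
  by [].
move: (endpoints p) pA => E EA; apply/setP => y; rewrite !inE.
by case yE: (y \in E); rewrite //= (disjointFr EA yE) andbF.
Qed.

Lemma matching_cost_setU1_uncovered A P u : u \notin A -> u \notin covered P ->
  cost (u |: A) P = h + cost A P.
Proof.
move=> uA uP; rewrite /matching_cost.
have -> : (u |: A) :\: covered P = u |: (A :\: covered P).
  by apply/setP => y; rewrite !inE; case: eqP => // ->; rewrite uP.
rewrite cardsU1 inE (negbTE uA) andbF /= natrD; ring.
Qed.

Lemma diluted_M_le A P : is_matching e A P -> M A <= cost A P.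
Proof. exact: bigmin_le_cond. Qed.

Lemma diluted_M_attained A : exists2 P, is_matching e A P & M A = cost A P.
Proof.
apply: (big_ind (fun y => exists2 P, is_matching e A P & y = cost A P)).
- exists set0; first by apply/is_matchingP; split => p; rewrite inE.
  by rewrite /matching_cost /covered !big_set0 setD0 add0r.
- move=> _ _ [P PA ->] [Q QA ->].
  by case: (leP (cost A P) (cost A Q)); [exists P | exists Q].
- by move=> P PA; exists P.
Qed.

Lemma setU2_setD1 u x B : x \in B -> [set u; x] :|: (B :\ x) = u |: B.
Proof.
move=> xB; apply/setP => y; rewrite !inE.
by case: (y =P x) => [->|_]; rewrite ?xB ?orbT ?orbF.
Qed.

Lemma disjoint_set2_setD1 u x B : u \notin B -> [disjoint [set u; x] & B :\ x].
Proof.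
move=> uB; apply/pred0P => y /=; rewrite !inE.
case: (y =P x) => [->|_]; rewrite ?andbF //= orbF.
by case: (y =P u) => [->|]; rewrite ?(negbTE uB).
Qed.

Lemma diluted_M_setU1_uncovered u B : u \notin B -> M (u |: B) <= h + M B.
Proof.
move=> uB; have [P PB ->] := diluted_M_attained B.
have sPB := is_matching_covered PB.
have uP : u \notin covered P by apply: contra uB; apply: (subsetP sPB).
rewrite -(matching_cost_setU1_uncovered uB uP); apply: diluted_M_le.
by apply: is_matching_subset PB (subxx _) _; apply: subset_trans sPB (subsetUr _ _).
Qed.

Lemma diluted_M_setU1_matched u x B : u \notin B -> e u x -> x \in B ->
  M (u |: B) <= w u x + M (B :\ x).
Proof.
move=> uB eux xB; have [P PB ->] := diluted_M_attained (B :\ x).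
have uxP : (u, x) \notin P.
  apply: contra uB => uxP; have /subsetP sPB := is_matching_covered PB.
  have : u \in covered P by apply/bigcupP; exists (u, x); rewrite // !inE eqxx.
  by move/sPB; rewrite inE => /andP [].
have uxB := is_matching_setU1 (p := (u, x)) PB eux (disjoint_set2_setD1 x uB).
have := diluted_M_le uxB.
by rewrite matching_cost_setU1 ?disjoint_set2_setD1 //= setU2_setD1.
Qed.

Section Symmetric.
Hypotheses (e_sym : symmetric e) (e_irr : irreflexive e)
  (w_sym : forall x y, e x y -> w x y = w y x).

Lemma edge_endpoints u p : e p.1 p.2 -> u \in endpoints p ->
  exists x, [/\ endpoints p = [set u; x], w p.1 p.2 = w u x & e u x].
Proof.
case: p => a b; rewrite /endpoints /= => eab; rewrite !inE => /orP [] /eqP ->.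
- by exists b.
- by exists a; rewrite setUC w_sym // e_sym.
Qed.

Lemma matching_cost_covered_ge u B P : u \notin B ->
  is_matching e (u |: B) P -> u \in covered P ->
  exists2 x, e u x && (x \in B) & w u x + M (B :\ x) <= cost (u |: B) P.
Proof.
move=> uB PuB /bigcupP [p pP up]; have /subsetP sPuB := is_matching_covered PuB.
case/is_matchingP: (PuB) => edgeP disjP.
have [ep _ _] := and3P (edgeP p pP).
have [x [Ep wp eux]] := edge_endpoints ep up.
have xB : x \in B.
  have : x \in covered P by apply/bigcupP; exists p; rewrite // Ep !inE eqxx orbT.
  by move/sPuB; rewrite in_setU1 => /orP [/eqP xu | //]; move: eux; rewrite xu e_irr.
have QB : is_matching e (B :\ x) (P :\ p).
  apply: is_matching_subset PuB (subD1set _ _) _; apply/subsetP => y.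
  case/bigcupP => q /setD1P [qp qP] yq.
  have := disjointFr (disjP _ _ qP pP qp) yq; rewrite Ep !inE => /norP [yu yx].
  have : y \in covered P by apply/bigcupP; exists q.
  by move/sPuB; rewrite !inE (negbTE yu) yx.
exists x; first by rewrite eux xB.
rewrite -(setD1K pP) -(setU2_setD1 u xB) -Ep matching_cost_setU1 ?inE ?eqxx //;
  last by rewrite Ep disjoint_set2_setD1.
by rewrite wp lerD2l diluted_M_le.
Qed.

Lemma diluted_M_setU1 u B : u \notin B -> M (u |: B) =
  \big[Num.min/(h + M B)]_(x | e u x && (x \in B)) (w u x + M (B :\ x)).
Proof.
move=> uB; apply: le_anti; apply/andP; split.
  apply: le_bigmin; first exact: diluted_M_setU1_uncovered.
  by move=> x /andP [eux xB]; apply: diluted_M_setU1_matched.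
have [P PuB ->] := diluted_M_attained (u |: B).
have [uP | uP] := boolP (u \in covered P).
  have [x ux_edge le_cost] := matching_cost_covered_ge uB PuB uP.
  by apply: (bigmin_inf x).
apply: le_trans (bigmin_le_id _ _ _ _) _.
rewrite matching_cost_setU1_uncovered // lerD2l diluted_M_le //.
have /subsetP sPuB := is_matching_covered PuB.
apply: is_matching_subset PuB (subxx _) _; apply/subsetP => y yP.
move: (sPuB y yP); rewrite in_setU1 => /orP [/eqP yu | //].
by move: uP; rewrite -yu yP.
Qed.

Lemma ge_valueE n (S : {set T}) u : u \in S -> (#|~: S| <= n)%N ->
  ge_value e w theta n S u = M (~: S) - M (u |: ~: S).
Proof.
elim: n S u => [|n IH] S u uS /= leSn.
  have -> : ~: S = set0 by apply/eqP; rewrite -cards_eq0 -leqn0.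
  rewrite diluted_M_setU1 ?inE // big_pred0 => [|x]; first ring.
  by rewrite inE andbF.
have subr_min (a : R) :
    {morph (fun y => a - y) : b c / Num.min b c >-> Num.max b c}.
  by move=> b c; rewrite oppr_min addr_maxr.
rewrite diluted_M_setU1 ?inE ?uS // (big_morph _ (subr_min _) (erefl _)).
have -> : M (~: S) - (h + M (~: S)) = - h by ring.
apply: eq_big => [x | x /andP [_ xS]]; first by rewrite inE.
have compl_setU1 : ~: (x |: S) = ~: S :\ x.
  by apply/setP => y; rewrite !inE negb_or andbC.
rewrite IH ?setU11 // compl_setU1; last first.
  by move: leSn; rewrite (cardsD1 x) inE xS.
rewrite setD1K ?inE //; ring.
Qed.

End Symmetric.
End DilutedMatching.

Theorem proposition1 (R : realFieldType) (T : finType) (e : rel T)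
    (w : T -> T -> R) (theta : R) (v : T) :
  symmetric e -> irreflexive e ->
  (forall x y, e x y -> w x y = w y x) ->
  (forall x y, e x y -> 0 <= w x y) ->
  0 <= theta ->
  bob_payoff e w theta v =
    diluted_M e w theta [set: T] - diluted_M e w theta [set~ v].
Proof.
move=> e_sym e_irr w_sym _ _.
rewrite /bob_payoff /alice_payoff ge_valueE ?set11 ?max_card //.
have -> : v |: ~: [set v] = [set: T] by apply/setP => y; rewrite !inE orbN.
by rewrite opprB.
Qed.
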